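(* Let $c_i,\alpha_j\in\mathbb Z$. The Riordan array $$(g,f)=\Bigl(1+\sum_{i\ge1}c_it^i,\ t\bigl(1+\alpha_1t+\alpha_2t^2+\cdots+\alpha_6t^6+O(t^7)\bigr)\Bigr)\in S\mathcal R(\mathbb Z)$$ belongs to $[S\mathcal R(\mathbb Z),S\mathcal R(\mathbb Z)]$ if and only if $c_1=0$, $\alpha_1=\alpha_2=0$, and $\alpha_3\equiv\alpha_4\equiv\alpha_6\pmod 2$. In particular, $$S\mathcal R(\mathbb Z)^{ab}\cong\mathbb Z^3\times(\mathbb Z_2)^2.$$
   Context: $S\mathcal R(\mathbb Z)$ is the group of Riordan arrays $(g,f)$ with $g=1+\sum_{i\ge1}c_it^i$, $f=t+\sum_{k\ge2}f_kt^k$ in $\mathbb Z[[t]]$, identified with lower triangular matrices $(d_{n,k})$, $d_{n,k}=[t^n]gf^k$, with product $(g_1,f_1)(g_2,f_2)=(g_1\cdot(g_2\circ f_1),\,f_2\circ f_1)$. Here $[S\mathcal R(\mathbb Z),S\mathcal R(\mathbb Z)]$ denotes the topological commutator subgroup: the set of limits of finite products of commutators $x^{-1}y^{-1}xy$, in the topology of formal power series ($t$-adic, coefficientwise convergence: a sequence converges if for each $n$ its coefficients of $t^0,\dots,t^n$ in both components eventually agree with those of the limit); $S\mathcal R(\mathbb Z)^{ab}$ is the quotient by this subgroup. $\mathbb Z_2=\mathbb Z/2\mathbb Z$. *)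

From mathcomp Require Import all_boot all_order all_algebra.
Set Implicit Arguments. Unset Strict Implicit. Unset Printing Implicit Defensive.
Import GRing.Theory Num.Theory.
Local Open Scope ring_scope.

(* formal power series in Z[[t]] : n |-> [t^n] *)
Definition series := nat -> int.

Definition delta0 : series := fun n => if n == 0%N then 1 else 0.
Definition tX : series := fun n => if n == 1%N then 1 else 0.

Definition smul (a b : series) : series :=
  fun n => \sum_(i < n.+1) a i * b (n - i)%N.

Fixpoint spow (f : series) (k : nat) : series :=
  if k is k'.+1 then smul f (spow f k') else delta0.

(* composition g o f, for f with f 0 = 0 : [t^n] g(f) = sum_{k<=n} g_k [t^n] f^k *)
Definition scomp (g f : series) : series :=
  fun n => \sum_(k < n.+1) g k * spow f k n.

Definition riordan := (series * series)%type.

Definition isSR (x : riordan) : Prop :=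
  x.1 0%N = 1 /\ x.2 0%N = 0 /\ x.2 1%N = 1.

Definition rmul (x y : riordan) : riordan :=
  (smul x.1 (scomp y.1 x.2), scomp y.2 x.2).

Definition rid : riordan := (delta0, tX).

(* z is a commutator x^-1 y^-1 x y with x, y in SR(Z);
   equivalently (in the group) y x z = x y *)
Definition is_commutator (z : riordan) : Prop :=
  isSR z /\ exists x y, isSR x /\ isSR y /\
    (forall n, (rmul (rmul y x) z).1 n = (rmul x y).1 n /\
               (rmul (rmul y x) z).2 n = (rmul x y).2 n).

Inductive prod_comm : riordan -> Prop :=
| pc_id : prod_comm rid
| pc_mul w z : prod_comm w -> is_commutator z -> prod_comm (rmul w z).

(* topological commutator subgroup: limits (coefficientwise) of finite
   products of commutators *)
Definition in_top_commutator (x : riordan) : Prop :=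
  forall N : nat, exists w, prod_comm w /\
    forall n, (n <= N)%N -> x.1 n = w.1 n /\ x.2 n = w.2 n.

(* The map ab (g, f) = (g_1, f_2, f_3 - f_2^2, f_4 + f_5 + C(f_3, 2), f_5 + f_7 + f_3 f_5),
   with the last two entries read mod 2, is a homomorphism: this is checked on the
   coefficients of a composition up to degree 7. Hence it kills commutators and, as it
   only depends on the coefficients of degree < 8, also their coefficientwise limits.
   Conversely, if ab x = 0 then x is matched degree by degree by products of commutators.
   The g-coefficient of degree n is adjusted by the commutator of (1 + e t, t) with
   (1, t + t^n). The f-coefficient of degree n = i + j + 1 is adjusted by the commutator
   of (1, t + a t^(i+1)) with (1, t + b t^(j+1)), whose first nontrivial coefficient is
   (j - i) a b. For even n one takes j = i + 1; for odd n this coefficient is even, which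
   is where the two parities come from (n = 5, 7). For odd n >= 9 three commutators, one
   of them involving t + t^2 or t + t^3, are combined so that their leading terms cancel
   and the next coefficient takes an arbitrary value. *)

From mathcomp Require Import all_boot all_order all_algebra.
From mathcomp Require Import ring zify.
Set Implicit Arguments.
Unset Strict Implicit.
Import GRing.Theory Num.Theory.
Local Open Scope ring_scope.

Arguments spow : simpl never.
Arguments smul : simpl never.
Arguments scomp : simpl never.

Lemma spow0 (f : series) n : spow f 0 n = delta0 n.
Proof. by []. Qed.

Lemma spowS (f : series) k n :
  spow f k.+1 n = \sum_(i < n.+1) f i * spow f k (n - i)%N.
Proof. by []. Qed.

Lemma smulE (a b : series) n : smul a b n = \sum_(i < n.+1) a i * b (n - i)%N.
Proof. by []. Qed.

Lemma scompE (g f : series) n : scomp g f n = \sum_(k < n.+1) g k * spow f k n.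
Proof. by []. Qed.

Lemma eq_smull (a a' b : series) : a =1 a' -> smul a b =1 smul a' b.
Proof. by move=> eq_a n; rewrite !smulE; apply: eq_bigr => i _; rewrite eq_a. Qed.

Lemma eq_smulr (a b b' : series) : b =1 b' -> smul a b =1 smul a b'.
Proof. by move=> eq_b n; rewrite !smulE; apply: eq_bigr => i _; rewrite eq_b. Qed.

Lemma eq_scompl (g g' f : series) : g =1 g' -> scomp g f =1 scomp g' f.
Proof. by move=> eq_g n; rewrite !scompE; apply: eq_bigr => i _; rewrite eq_g. Qed.

Lemma smul_delta0l (a : series) n : smul delta0 a n = a n.
Proof.
rewrite smulE big_ord_recl subn0 mul1r big1 ?addr0 // => i _.
by rewrite /delta0 /= mul0r.
Qed.

Lemma smul_delta0r (a : series) n : smul a delta0 n = a n.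
Proof.
rewrite smulE big_ord_recr /= subnn mulr1 big1 ?add0r // => i _.
by rewrite /delta0 subn_eq0 leqNgt ltn_ord mulr0.
Qed.

Section PowersOfSeries.

Variable f : series.
Hypothesis f0 : f 0%N = 0.

Lemma spow_lt k n : (n < k)%N -> spow f k n = 0.
Proof.
elim: k n => [//|k IH] n lt_nk; rewrite spowS big1 // => -[[|i] lt_i _] /=.
  by rewrite f0 mul0r.
by rewrite IH ?mulr0 //; lia.
Qed.

Lemma spow1 n : spow f 1 n = f n.
Proof. by rewrite spowS -/(smul f delta0 n) smul_delta0r. Qed.

Lemma spowS_nat k n :
  spow f k.+1 n = \sum_(1 <= i < (n - k).+1) f i * spow f k (n - i)%N.
Proof.
rewrite spowS big_ord_recl f0 mul0r add0r [RHS]big_add1 /=.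
rewrite -(big_mkord xpredT (fun i => f i.+1 * spow f k (n - i.+1)%N)).
rewrite (big_cat_nat _ (n := n - k)) ?leq_subr //= [X in _ + X]big_nat_cond.
rewrite [X in _ + X]big1 ?addr0 // => i /andP[/andP[le_i lt_i] _].
by rewrite spow_lt ?mulr0 //; lia.
Qed.

Hypothesis f1 : f 1%N = 1.

Lemma spow_diag n : spow f n n = 1.
Proof.
elim: n => [//|n IH].
rewrite spowS (bigD1 (Ordinal (isT : (1 < n.+2)%N))) //= f1 subSS subn0 IH mul1r.
rewrite big1 ?addr0 // => -[[|[|i]] lt_i] //= _; first by rewrite f0 mul0r.
by rewrite spow_lt ?mulr0 //; lia.
Qed.

Lemma spow_diag1 k : spow f k k.+1 = k%:R * f 2%N.
Proof.
elim: k => [|k IH]; first by rewrite spow0 mul0r.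
rewrite spowS big_ord_recl f0 mul0r add0r.
rewrite big_ord_recl /= f1 mul1r subSS subn0 IH.
rewrite big_ord_recl /= subSS subSS subn0 spow_diag mulr1.
rewrite big1 ?addr0; first by rewrite mulrSr; ring.
by move=> i _; rewrite /bump /= spow_lt ?mulr0 //; have := ltn_ord i; lia.
Qed.

Lemma spow_diag2 k :
  spow f k k.+2 = k%:R * f 3%N + 'C(k, 2)%:R * f 2%N ^+ 2.
Proof.
elim: k => [|k IH]; first by rewrite spow0 bin0n !mul0r addr0.
rewrite spowS big_ord_recl f0 mul0r add0r.
rewrite big_ord_recl /= f1 mul1r subSS subn0 IH.
rewrite big_ord_recl /= subSS subSS subn0 spow_diag1.
rewrite big_ord_recl /= subSS subSS subSS subn0 spow_diag mulr1.
rewrite big1 ?addr0; last first.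
  by move=> i _; rewrite /bump /= spow_lt ?mulr0 //; have := ltn_ord i; lia.
by rewrite binS bin1 natrD !mulrSr; ring.
Qed.

End PowersOfSeries.

Lemma scomp_delta0 (f : series) n : scomp delta0 f n = delta0 n.
Proof.
rewrite scompE big_ord_recl spow0 mul1r big1 ?addr0 // => i _.
by rewrite /delta0 /= mul0r.
Qed.

Lemma scomp_tX (f : series) n : f 0%N = 0 -> scomp tX f n = f n.
Proof.
move=> f0; rewrite scompE big_ord_recl mul0r add0r.
case: n => [|n]; first by rewrite big_ord0 f0.
rewrite big_ord_recl /= mul1r spow1 // big1 ?addr0 // => i _.
by rewrite /tX /= mul0r.
Qed.

Lemma spow_tX k n : spow tX k n = (n == k)%:R.
Proof.
elim: k n => [|k IH] [|n] //; first by rewrite spowS big_ord_recl big_ord0 mul0r addr0.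
rewrite spowS big_ord_recl mul0r add0r big_ord_recl /= mul1r subn1 IH.
by rewrite big1 ?addr0 // => i _; rewrite /tX /= mul0r.
Qed.

Lemma scomp_tXr (a : series) n : scomp a tX n = a n.
Proof.
rewrite scompE big_ord_recr /= spow_tX eqxx mulr1 big1 ?add0r // => i _.
by rewrite spow_tX gtn_eqF ?mulr0.
Qed.

Lemma scomp0 (g f : series) : scomp g f 0 = g 0%N.
Proof. by rewrite scompE big_ord_recl big_ord0 spow0 mulr1 addr0. Qed.

Lemma scomp1 (g f : series) : f 0%N = 0 -> scomp g f 1 = g 1%N * f 1%N.
Proof.
move=> f0; rewrite scompE !big_ord_recl big_ord0 spow0 /= spow1 //.
by rewrite /delta0 /= mulr0 add0r addr0.
Qed.

Lemma smul0 (a b : series) : smul a b 0 = a 0%N * b 0%N.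
Proof. by rewrite smulE big_ord_recl big_ord0 addr0. Qed.

Lemma scomp_inj (z z' f : series) : f 0%N = 0 -> f 1%N = 1 ->
  scomp z f =1 scomp z' f -> z =1 z'.
Proof.
move=> f0 f1 eq_zf d; elim/ltn_ind: d => d IH.
have := eq_zf d; rewrite !scompE !big_ord_recr /= spow_diag // !mulr1.
rewrite (eq_bigr (fun k : 'I_d => z' k * spow f k d)) => [/addrI //|k _].
by rewrite IH.
Qed.

Lemma rmul_coef01 (x y : riordan) : x.2 0%N = 0 ->
  [/\ (rmul x y).1 0%N = x.1 0%N * y.1 0%N, (rmul x y).2 0%N = y.2 0%N
    & (rmul x y).2 1%N = y.2 1%N * x.2 1%N].
Proof. by move=> x20; rewrite /rmul /= smul0 !scomp0 scomp1. Qed.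

Lemma isSR_rmul x y : isSR x -> isSR y -> isSR (rmul x y).
Proof.
move=> [x10 [x20 x21]] [y10 [y20 y21]]; rewrite /isSR.
have [-> -> ->] := rmul_coef01 y x20.
by rewrite x10 y10 y20 x21 y21 mulr1.
Qed.

Lemma isSR_rmulr x y : isSR x -> isSR (rmul x y) -> isSR y.
Proof.
move=> [x10 [x20 x21]]; rewrite /isSR; have [-> -> ->] := rmul_coef01 y x20.
by rewrite x10 x21 mul1r mulr1.
Qed.

Definition causal (F : nat -> series -> int) :=
  forall d s s', (forall k, (k < d)%N -> s k = s' k) -> F d s = F d s'.

Fixpoint rec_table (F : nat -> series -> int) d : seq int :=
  if d is d'.+1 then rcons (rec_table F d') (F d' (nth 0 (rec_table F d')))
  else [::].

Definition rec_seq F : series := fun d => nth 0 (rec_table F d.+1) d.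

Lemma size_rec_table F d : size (rec_table F d) = d.
Proof. by elim: d => //= d IH; rewrite size_rcons IH. Qed.

Lemma nth_rec_table F d k : (k < d)%N -> nth 0 (rec_table F d) k = rec_seq F k.
Proof.
elim: d => // d IH lt_kd; rewrite /= nth_rcons size_rec_table.
case: ltnP => [|le_dk]; first exact: IH.
have -> : k = d by lia.
by rewrite eqxx /rec_seq /= nth_rcons size_rec_table ltnn eqxx.
Qed.

Lemma rec_seqE F d : causal F -> rec_seq F d = F d (rec_seq F).
Proof.
move=> causalF; rewrite /rec_seq /= nth_rcons size_rec_table ltnn eqxx.
by apply: causalF => k; apply: nth_rec_table.
Qed.

Definition scomp_solve (f h : series) : series :=
  rec_seq (fun d s => h d - \sum_(k < d) s k * spow f k d).

Lemma scomp_solveP f h d : f 0%N = 0 -> f 1%N = 1 ->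
  scomp (scomp_solve f h) f d = h d.
Proof.
move=> f0 f1; rewrite scompE big_ord_recr /= spow_diag // mulr1.
rewrite {2}/scomp_solve rec_seqE -/(scomp_solve f h); first ring.
by move=> e s s' eq_s; congr (_ - _); apply: eq_bigr => k _; rewrite eq_s.
Qed.

Definition smul_solve (a h : series) : series :=
  rec_seq (fun d s => h d - \sum_(i < d) a (d - i)%N * s i).

Lemma smul_solveP a h d : a 0%N = 1 -> smul a (smul_solve a h) d = h d.
Proof.
move=> a0; rewrite smulE (reindex_inj rev_ord_inj) big_ord_recr /= subnn subn0 a0 mul1r.
rewrite {2}/smul_solve rec_seqE -/(smul_solve a h).
  rewrite (eq_bigr (fun i : 'I_d => a (d - i)%N * smul_solve a h i)); first ring.
  by move=> i _; rewrite subSS subKn // ltnW.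
by move=> e s s' eq_s; congr (_ - _); apply: eq_bigr => k _; rewrite eq_s.
Qed.

Definition eqr (x y : riordan) := forall d, x.1 d = y.1 d /\ x.2 d = y.2 d.

Lemma rmul_solve (u v : riordan) : isSR u -> isSR v ->
  exists z, isSR z /\ eqr (rmul u z) v.
Proof.
case: u v => [u1 u2] [v1 v2] [/= u10 [u20 u21]] SRv.
set b := smul_solve u1 v1; set z := (scomp_solve u2 b, scomp_solve u2 v2).
have uz_v : eqr (rmul (u1, u2) z) (v1, v2).
  have comp_b : scomp (scomp_solve u2 b) u2 =1 b by move=> k; apply: scomp_solveP.
  by move=> d; rewrite /rmul /= scomp_solveP // (eq_smulr _ comp_b) smul_solveP.
exists z; split => //; apply: (isSR_rmulr (x := (u1, u2))) => //.
by rewrite /isSR (proj1 (uz_v _)) !(proj2 (uz_v _)).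
Qed.

Lemma commutator_exists (x y : riordan) : isSR x -> isSR y ->
  exists z, is_commutator z /\ eqr (rmul (rmul y x) z) (rmul x y).
Proof.
move=> SRx SRy; have [z [SRz yxz]] := rmul_solve (isSR_rmul SRy SRx) (isSR_rmul SRx SRy).
by exists z; split => //; split => //; exists x, y.
Qed.

Definition agree n (x y : riordan) :=
  forall i, (i < n)%N -> x.1 i = y.1 i /\ x.2 i = y.2 i.

Lemma agree_trans n x y z : agree n x y -> agree n y z -> agree n x z.
Proof. by move=> xy yz i lt_in; case: (xy i lt_in) => -> ->; apply: yz. Qed.

Lemma agree_le m n x y : (m <= n)%N -> agree n x y -> agree m x y.
Proof. by move=> le_mn xy i lt_im; apply: xy; lia. Qed.

Lemma scomp_agree (z r f : series) m d : (forall k, (k < m)%N -> z k = r k) ->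
  scomp z f d = scomp r f d + \sum_(m <= k < d.+1) (z k - r k) * spow f k d.
Proof.
move=> eq_zr; rewrite !scompE.
have -> : \sum_(k < d.+1) z k * spow f k d =
    \sum_(k < d.+1) r k * spow f k d + \sum_(k < d.+1) (z k - r k) * spow f k d.
  by rewrite -big_split /=; apply: eq_bigr => k _; ring.
congr (_ + _); rewrite -(big_mkord xpredT (fun k => (z k - r k) * spow f k d)).
have vanish k : (k < m)%N -> (z k - r k) * spow f k d = 0.
  by move=> lt_km; rewrite eq_zr ?subrr ?mul0r.
case: (leqP m d.+1) => le_m.
  rewrite (big_cat_nat _ le_m) //= big_nat_cond big1 ?add0r // => k.
  by case/andP=> /andP[_ lt_km] _; apply: vanish.
rewrite [RHS]big_geq ?(ltnW le_m) // big_nat_cond big1 // => k /andP[/andP[_ lt_k] _].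
by apply: vanish; lia.
Qed.

Section NearIdentityFactor.

Variables (u z : riordan) (m : nat).
Hypotheses (SRu : isSR u) (z_near : agree m z rid).

(* The cast fixes the carrier of the sum to int, as required by the bigop lemmas. *)
Lemma rmul_near_id2 d : (2 <= m)%N ->
  (rmul u z).2 d = u.2 d + \sum_(m <= k < d.+1) (z.2 k * spow u.2 k d : int).
Proof.
move=> ge2_m; case: SRu => _ [u20 _] /=.
rewrite (@scomp_agree z.2 tX u.2 m d) => [|k lt_km]; last by case: (z_near lt_km).
rewrite scomp_tX //; congr (_ + _); rewrite !big_nat; apply: eq_bigr => k /andP[le_mk _].
by rewrite /tX; case: eqP => [k1|]; [lia | rewrite subr0].
Qed.

Lemma rmul_near_id1 d : (1 <= m)%N -> (d <= m)%N ->
  (rmul u z).1 d = u.1 d + (d == m)%:R * z.1 m.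
Proof.
move=> ge1_m le_dm; case: SRu => u10 [u20 u21] /=.
have comp_z1 e : (e <= m)%N -> scomp z.1 u.2 e = delta0 e + (e == m)%:R * z.1 m.
  move=> le_em; rewrite (@scomp_agree z.1 delta0 u.2 m e) => [|k lt_km]; last first.
    by case: (z_near lt_km).
  rewrite scomp_delta0; congr (_ + _); have [->|ne_em] := eqVneq e m.
    by rewrite big_nat1 spow_diag // mulr1 /delta0 gtn_eqF // subr0 mul1r.
  by rewrite big_geq ?mul0r //; lia.
rewrite smulE (eq_bigr (fun i : 'I_d.+1 => u.1 i * delta0 (d - i)%N +
    (i == 0%N :> nat)%:R * ((d == m)%:R * z.1 m))) => [|i _]; last first.
  rewrite comp_z1; last by have := ltn_ord i; lia.
  case: i => [[|i] lt_i] /=; first by rewrite subn0 u10 !mul1r.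
  rewrite (_ : (d - i.+1 == m)%N = false); first by rewrite !mul0r !addr0.
  by apply/eqP; lia.
rewrite big_split /= -smulE smul_delta0r; congr (_ + _).
by rewrite big_ord_recl /= mul1r big1 ?addr0 // => i _; rewrite mul0r.
Qed.

Lemma rmul_near_id1_lt d : (1 <= m)%N -> (d < m)%N -> (rmul u z).1 d = u.1 d.
Proof. by move=> ge1_m lt_dm; rewrite rmul_near_id1 ?ltn_eqF ?mul0r ?addr0 // ltnW. Qed.

Lemma rmul_near_id1_eq : (1 <= m)%N -> (rmul u z).1 m = u.1 m + z.1 m.
Proof. by move=> ge1_m; rewrite rmul_near_id1 // eqxx mul1r. Qed.

Hypothesis ge2_m : (2 <= m)%N.

Lemma rmul_near_id2_lt d : (d < m)%N -> (rmul u z).2 d = u.2 d.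
Proof. by move=> lt_dm; rewrite rmul_near_id2 // big_geq ?addr0. Qed.

Lemma rmul_near_id2_eq : (rmul u z).2 m = u.2 m + z.2 m.
Proof.
by case: SRu => _ [u20 u21]; rewrite rmul_near_id2 // big_nat1 (spow_diag u20 u21) mulr1.
Qed.

Lemma rmul_near_id2_next :
  (rmul u z).2 m.+1 = u.2 m.+1 + z.2 m * (m%:R * u.2 2%N) + z.2 m.+1.
Proof.
case: SRu => _ [u20 u21]; rewrite rmul_near_id2 // big_nat_recl; last lia.
by rewrite big_nat1 (spow_diag1 u20 u21) (spow_diag u20 u21) mulr1 addrA.
Qed.

Lemma rmul_near_id2_next2 :
  (rmul u z).2 m.+2 = u.2 m.+2 + z.2 m * (m%:R * u.2 3%N + 'C(m, 2)%:R * u.2 2%N ^+ 2)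
     + z.2 m.+1 * (m.+1%:R * u.2 2%N) + z.2 m.+2.
Proof.
case: SRu => _ [u20 u21]; rewrite rmul_near_id2 // !big_nat_recl ?leqW //.
rewrite big_geq // addr0 (spow_diag2 u20 u21) (spow_diag1 u20 u21) (spow_diag u20 u21).
by ring.
Qed.

Lemma agree_rmul_near_id : agree m (rmul u z) u.
Proof.
move=> i lt_im; rewrite rmul_near_id2_lt // rmul_near_id1_lt //; lia.
Qed.

End NearIdentityFactor.

Lemma rmul_eqr_near_id (u v z : riordan) n : isSR u -> isSR z -> (2 <= n)%N ->
  eqr (rmul u z) v -> agree n u v ->
  [/\ agree n z rid, z.1 n = v.1 n - u.1 n & z.2 n = v.2 n - u.2 n].
Proof.
move=> SRu [z10 [z20 z21]] ge2_n uz_v uv.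
have z_near1 : agree 1 z rid by case=> [_|//]; rewrite z10 z20.
have z_near2 : agree 2 z rid.
  case=> [|[|i]] lt_i //; rewrite /rid /delta0 /tX /= z21.
  have [g_uz _] := uz_v 1%N; have [g_uv _] := uv 1%N ge2_n.
  have := rmul_near_id1_eq SRu z_near1 (leqnn 1); lia.
have z_near m : (2 <= m <= n)%N -> agree m z rid.
  elim: m => [//|m IH] /andP[ge2_m le_mn].
  have [le1_m|lt1_m] := leqP m 1; first by have -> : m = 1%N by lia.
  have z_near_m := IH (introT andP (conj lt1_m (ltnW le_mn))).
  move=> i; rewrite ltnS leq_eqVlt => /predU1P[->|]; last exact: z_near_m.
  have [g_uv f_uv] := uv m le_mn; have [g_uz f_uz] := uz_v m.
  rewrite /rid /delta0 /tX /= !gtn_eqF //.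
  have := rmul_near_id1_eq SRu z_near_m (ltnW lt1_m).
  have := rmul_near_id2_eq SRu z_near_m lt1_m; lia.
have z_near_n := z_near n (introT andP (conj ge2_n (leqnn n))).
have [g_uz f_uz] := uz_v n.
have := rmul_near_id1_eq SRu z_near_n (ltnW ge2_n).
have := rmul_near_id2_eq SRu z_near_n ge2_n.
split => //; lia.
Qed.

Definition elem (i : nat) (a : int) : series :=
  fun d => if d == 1%N then 1 else if d == i.+1 then a else 0.

Definition trunc_series N (a : series) : {poly int} := \poly_(i < N) a i.

Lemma coef_trunc_series_exp N (f : series) k d :
  (d < N)%N -> (trunc_series N f ^+ k)`_d = spow f k d.
Proof.
elim: k d => [|k IH] d lt_dN; first by rewrite expr0 coef1 spow0 /delta0; case: eqP.
rewrite exprS coefM spowS; apply: eq_bigr => -[j lt_jd] _ /=.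
rewrite coef_poly IH; last lia.
by have -> : (j < N)%N by lia.
Qed.

Lemma trunc_series_elem N i a : (1 <= i)%N -> (i.+1 < N)%N ->
  trunc_series N (elem i a) = 'X * (1 + a%:P * 'X^i).
Proof.
move=> ge1_i lt_iN; rewrite mulrDr mulr1 mulrCA -exprS mul_polyC.
apply/polyP => d; rewrite coef_poly coefD coefX coefZ coefXn /elem.
have [lt_dN|le_Nd] := ltnP d N; case: eqP => [d1|ne_d1] /=.
- subst d; rewrite (_ : (1 == i.+1)%N = false) ?mulr0 ?addr0 //; apply/eqP; lia.
- by case: eqP => _; rewrite ?mulr1 ?mulr0 ?add0r.
- lia.
- by case: eqP => [|_]; [lia | rewrite mulr0 add0r].
Qed.

Lemma exprD1_mod3 (R : comNzRingType) (x : R) m :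
  exists r, (1 + x) ^+ m = 1 + m%:R * x + 'C(m, 2)%:R * x ^+ 2 + x ^+ 3 * r.
Proof.
elim: m => [|m [r IH]]; first by exists 0; rewrite bin_small //; ring.
exists ((1 + x) * r + 'C(m, 2)%:R); rewrite exprS IH binS bin1 !natrD; ring.
Qed.

Lemma spow_elem i a m d : (1 <= i)%N -> (d < m + 3 * i)%N ->
  spow (elem i a) m d = (d == m)%:R + (d == m + i)%N%:R * (m%:R * a)
     + (d == m + 2 * i)%N%:R * ('C(m, 2)%:R * a ^+ 2).
Proof.
move=> ge1_i lt_d; rewrite -(@coef_trunc_series_exp (m + 3 * i)) //.
rewrite trunc_series_elem //; last lia.
rewrite exprMn; have [r ->] := exprD1_mod3 (a%:P * 'X^i) m.
rewrite !exprMn -!exprM -!polyC_exp -!polyC_natr !mulrA -!polyCM -!mulrA.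
rewrite !mulrDr mulr1 !coefD !coefXnM !coefCM !coefXnM coefXn !coefXn.
case: ltnP => [lt_dm|le_md].
  by rewrite !ltn_eqF ?mul0r ?addr0 //; lia.
rewrite ifT; last lia.
have -> : (d - m == i)%N = (d == m + i)%N by apply/eqP/eqP; lia.
have -> : (d - m == i * 2)%N = (d == m + 2 * i)%N by apply/eqP/eqP; lia.
by ring.
Qed.

Lemma scomp_elem j b (f : series) d : (1 <= j)%N -> f 0%N = 0 ->
  scomp (elem j b) f d = f d + b * spow f j.+1 d.
Proof.
move=> ge1_j f0.
rewrite (@scomp_agree (elem j b) tX f j.+1 d) => [|k lt_kj]; last first.
  by rewrite /elem /tX; case: eqP => // _; case: eqP => //; lia.
rewrite scomp_tX //; congr (_ + _).
have [lt_dj|le_jd] := ltnP d j.+1; first by rewrite big_geq // spow_lt // mulr0.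
rewrite big_ltn // big_nat big1 ?addr0 => [|k /andP[lt_jk _]]; last first.
  by rewrite /elem /tX !gtn_eqF ?subrr ?mul0r //; lia.
by rewrite /elem /tX gtn_eqF // eqxx subr0.
Qed.

Lemma scomp_elem_elem i j a b d : (1 <= i)%N -> (1 <= j)%N -> (d < j.+1 + 3 * i)%N ->
  scomp (elem j b) (elem i a) d = elem i a d + b * ((d == j.+1)%:R
    + (d == j.+1 + i)%N%:R * (j.+1%:R * a)
    + (d == j.+1 + 2 * i)%N%:R * ('C(j.+1, 2)%:R * a ^+ 2)).
Proof. by move=> ge1_i ge1_j lt_d; rewrite scomp_elem // spow_elem. Qed.

Definition lagr (f : series) : riordan := (delta0, f).

Definition lagrange (x : riordan) := x.1 =1 delta0.

Lemma isSR_lagr_elem i a : isSR (lagr (elem i a)).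
Proof. by []. Qed.

Lemma rmul_lagrange1 (u z : riordan) : lagrange z -> (rmul u z).1 =1 u.1.
Proof.
move=> z1 d; rewrite /rmul /= (eq_smulr _ (eq_scompl _ z1)).
by rewrite (eq_smulr _ (scomp_delta0 _)) smul_delta0r.
Qed.

Definition small_commutator n (z : riordan) :=
  [/\ is_commutator z, lagrange z & agree n z rid].

Lemma commutator_lagrange (f g : series) n :
  isSR (lagr f) -> isSR (lagr g) -> (2 <= n)%N ->
  (forall d, (d < n)%N -> scomp f g d = scomp g f d) ->
  let p := scomp f g in let q := scomp g f in
  exists z, [/\ small_commutator n z, z.2 n = q n - p n,
    z.2 n.+1 = q n.+1 - p n.+1 - z.2 n * (n%:R * p 2%N)
  & z.2 n.+2 = q n.+2 - p n.+2 - z.2 n * (n%:R * p 3%N + 'C(n, 2)%:R * p 2%N ^+ 2)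
                - z.2 n.+1 * (n.+1%:R * p 2%N)].
Proof.
move=> SRf SRg ge2_n pq p q; set u := rmul (lagr g) (lagr f).
have SRu : isSR u by apply: isSR_rmul.
have [z [comm_z uz_v]] := commutator_exists SRf SRg; have [SRz _] := comm_z.
have u1 : u.1 =1 delta0 by move=> d; rewrite /u /= smul_delta0l scomp_delta0.
have z_lagr : lagrange z.
  have := SRu; case=> _ [u20 u21]; apply: (scomp_inj u20 u21) => d.
  rewrite scomp_delta0 -(smul_delta0l (scomp _ _)) -(eq_smull _ u1).
  by rewrite [LHS](proj1 (uz_v d)) /= smul_delta0l scomp_delta0.
have uv : agree n u (rmul (lagr f) (lagr g)).
  by move=> d lt_dn; rewrite /u /= !smul_delta0l !scomp_delta0 pq.
have [z_near _ z_n] := rmul_eqr_near_id SRu SRz ge2_n uz_v uv.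
exists z; split => //.
- have := rmul_near_id2_next SRu z_near ge2_n.
  by rewrite (proj2 (uz_v _)) /p /q => /= ->; rewrite /u /=; ring.
- have := rmul_near_id2_next2 SRu z_near ge2_n.
  by rewrite (proj2 (uz_v _)) /p /q => /= ->; rewrite /u /=; ring.
Qed.

Ltac decide_nat_eqs := repeat match goal with
  |- context [(?x == ?y)%N] => case: (@eqP nat x y) => ?; try (exfalso; lia)
  end.

Ltac expand_elem := rewrite !scomp_elem_elem /elem; [decide_nat_eqs; rewrite /= | lia..].

Lemma commutator_elem i j n a b : (1 <= i < j)%N -> n = (i + j).+1 ->
  exists z, [/\ small_commutator n z, z.2 n = (j%:R - i%:R) * a * b &
    (3 <= i)%N -> z.2 n.+1 = 0 /\ z.2 n.+2 = 0].
Proof.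
move=> /andP[ge1_i lt_ij] ->; have ge2_n : (2 <= (i + j).+1)%N by lia.
have [|z [small_z z_n z_n1 z_n2]] :=
  commutator_lagrange (isSR_lagr_elem i a) (isSR_lagr_elem j b) ge2_n.
  by move=> d lt_d; expand_elem; ring.
exists z; split => // [|ge3_i]; first by rewrite z_n; expand_elem; ring.
by rewrite z_n2 z_n1 z_n; expand_elem; split; ring.
Qed.

Lemma commutator_elem_t2 j n b : (3 <= j)%N -> n = j.+2 ->
  exists z, [/\ small_commutator n z, z.2 n = (j%:R - 1) * b &
    z.2 n.+1 = b * ('C(j.+1, 2)%:R - (j%:R - 1) * j.+2%:R)].
Proof.
move=> ge3_j ->; have ge2_n : (2 <= j.+2)%N by lia.
have [|z [small_z z_n z_n1 _]] :=
  commutator_lagrange (isSR_lagr_elem 1 1) (isSR_lagr_elem j b) ge2_n.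
  by move=> d lt_d; expand_elem; ring.
exists z; split => //; first by rewrite z_n; expand_elem; ring.
by rewrite z_n1 z_n; expand_elem; ring.
Qed.

Lemma commutator_elem_t3 j n b : (3 <= j)%N -> n = j.+3 ->
  exists z, [/\ small_commutator n z, z.2 n = (j%:R - 2) * b, z.2 n.+1 = 0 &
    z.2 n.+2 = b * ('C(j.+1, 2)%:R - (j%:R - 2) * j.+3%:R)].
Proof.
move=> ge3_j ->; have ge2_n : (2 <= j.+3)%N by lia.
have [|z [small_z z_n z_n1 z_n2]] :=
  commutator_lagrange (isSR_lagr_elem 2 1) (isSR_lagr_elem j b) ge2_n.
  by move=> d lt_d; expand_elem; ring.
have z_n' : z.2 j.+3 = (j%:R - 2) * b by rewrite z_n; expand_elem; ring.
have z_n1' : z.2 j.+4 = 0 by rewrite z_n1 z_n'; expand_elem; ring.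
by exists z; split => //; rewrite z_n2 z_n1' z_n'; expand_elem; ring.
Qed.

Definition appell1 (c : int) : series :=
  fun d => if d == 0%N then 1 else if d == 1%N then c else 0.

Lemma scomp_appell1 c (f : series) d : f 0%N = 0 ->
  scomp (appell1 c) f d = delta0 d + c * f d.
Proof.
move=> f0; rewrite (@scomp_agree (appell1 c) delta0 f 1 d) => [|[]] //.
rewrite scomp_delta0; congr (_ + _); case: d => [|d]; first by rewrite big_geq // f0 mulr0.
rewrite big_ltn // big_nat big1 ?addr0 => [|k /andP[lt1_k _]]; last first.
  by rewrite /appell1 /delta0 !gtn_eqF ?subrr ?mul0r //; lia.
by rewrite /appell1 /delta0 /= spow1 // subr0.
Qed.

Lemma commutator_appell k e : (1 <= k)%N ->
  exists z, [/\ is_commutator z, agree k.+1 z rid & z.1 k.+1 = e].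
Proof.
move=> ge1_k; set x : riordan := (appell1 (- e), tX); set y := lagr (elem k 1).
have SRx : isSR x by [].
have [z [comm_z uz_v]] := commutator_exists SRx (isSR_lagr_elem k 1); have [SRz _] := comm_z.
set u := rmul y x; set v := rmul x y.
have SRu : isSR u by apply: isSR_rmul.
have u1 d : u.1 d = delta0 d + (- e) * elem k 1 d.
  by rewrite /u /rmul /= smul_delta0l scomp_appell1.
have u2 d : u.2 d = elem k 1 d by rewrite /u /rmul /= scomp_tX.
have v1 d : v.1 d = appell1 (- e) d.
  by rewrite /v /rmul /= (eq_smulr _ (scomp_delta0 _)) smul_delta0r.
have v2 d : v.2 d = elem k 1 d by rewrite /v /rmul /= scomp_tXr.
have uv : agree k.+1 u v.
  move=> d lt_dk; rewrite u1 u2 v1 v2; split => //.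
  by rewrite /elem /appell1 /delta0; decide_nat_eqs; rewrite /=; ring.
have ge2_k1 : (2 <= k.+1)%N by lia.
have [z_near z_k1 _] := rmul_eqr_near_id SRu SRz ge2_k1 uz_v uv.
exists z; split => //.
by rewrite z_k1 u1 v1 /elem /appell1 /delta0; decide_nat_eqs; rewrite /=; ring.
Qed.

Definition choose2 (x : int) : int := ((x * (x - 1)) %/ 2)%Z.

Lemma modz2_cases x : (x %% 2)%Z = 0 \/ (x %% 2)%Z = 1.
Proof. by have := @modz_ge0 x 2 isT; have := @ltz_pmod x 2 isT; lia. Qed.

Lemma mul_choose2 x : choose2 x * 2 = x * (x - 1).
Proof.
rewrite /choose2 divzK //; apply/dvdz_mod0P.
have x_eq := divz_eq x 2; set q := (x %/ 2)%Z in x_eq.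
have [r0|r1] := modz2_cases x.
- by rewrite (_ : x * (x - 1) = (q * (x - 1)) * 2) ?modzMl // {1}x_eq r0; ring.
- by rewrite (_ : x * (x - 1) = (x * q) * 2) ?modzMl // {2}x_eq r1; ring.
Qed.

Lemma choose2D x y : choose2 (x + y) = choose2 x + choose2 y + x * y.
Proof. by apply: (@mulIf _ 2) => //; rewrite !mulrDl !mul_choose2; ring. Qed.

Lemma choose2_0 : choose2 0 = 0.
Proof. by rewrite /choose2 mul0r. Qed.

Definition parity (x : int) : 'Z_2 := x%:~R.

Lemma parity_mul2 x : parity (x * 2) = 0.
Proof. by rewrite /parity intrM (_ : 2%:~R = 0) ?mulr0 // -pmulrn pchar_Zp. Qed.

Lemma parityD x y : parity (x + y) = parity x + parity y.
Proof. exact: intrD. Qed.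

Lemma parityB x y : parity (x - y) = parity x - parity y.
Proof. exact: intrB. Qed.

Lemma parity_consec x : parity (x * (x - 1)) = 0.
Proof. by rewrite -mul_choose2 parity_mul2. Qed.

Lemma parity_mul_consec a x : parity (a * (x * (x - 1))) = 0.
Proof. by rewrite -mul_choose2 mulrA parity_mul2. Qed.

Lemma parity_eq0 x : parity x = 0 -> exists k, x = k * 2.
Proof.
move=> px0; exists (x %/ 2)%Z; have x_eq := divz_eq x 2.
have [r0|r1] := modz2_cases x; first by rewrite {1}x_eq r0 addr0.
move: px0; rewrite /parity {1}x_eq r1 intrD -/(parity _) parity_mul2 add0r.
by move/eqP; rewrite oner_eq0.
Qed.

Definition inv4 (f : series) : int := f 4%N + f 5%N + choose2 (f 3%N).
Definition inv5 (f : series) : int := f 5%N + f 7%N + f 3%N * f 5%N.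

(* In the notation alpha_j = f_(j+1) of the paper, ab records c_1, alpha_1,
   alpha_2 - alpha_1^2 and the parities of alpha_3 + alpha_4 + C(alpha_2, 2) and
   alpha_4 + alpha_6 + alpha_2 alpha_4. *)
Definition ab (x : riordan) : int * int * int * 'Z_2 * 'Z_2 :=
  (x.1 1%N, x.2 2%N, x.2 3%N - x.2 2%N ^+ 2, parity (inv4 x.2), parity (inv5 x.2)).

(* Six rounds suffice up to degree 7; spowS_nat drops the vanishing terms of each
   convolution, which keeps the expansion small. *)
Ltac expand_scomp :=
  rewrite ?scompE ?big_ord_recr ?big_ord0; simpl nat_of_ord;
  do 6 (rewrite ?spow1 ?spowS_nat //; rewrite /index_iota /subn; simpl Nat.sub;
        simpl iota; rewrite ?big_cons ?big_nil);
  rewrite ?spow1 ?spow0 // /delta0 /=.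

Section CompositionCoefficients.

Variables g f : series.
Hypotheses (f0 : f 0%N = 0) (f1 : f 1%N = 1) (g0 : g 0%N = 0) (g1 : g 1%N = 1).

Lemma scomp2 : scomp g f 2 = f 2%N + g 2%N.
Proof. by expand_scomp; rewrite f1 g0 g1; ring. Qed.

Lemma scomp3 : scomp g f 3 = f 3%N + g 3%N + (f 2%N * g 2%N + f 2%N * g 2%N).
Proof. by expand_scomp; rewrite f1 g0 g1; ring. Qed.

Lemma parity_inv4_scomp :
  parity (inv4 (scomp g f)) = parity (inv4 f) + parity (inv4 g).
Proof.
have -> : inv4 (scomp g f) = inv4 f + inv4 g
    + (2 * f 2%N * f 3%N * g 2%N + f 2%N * g 2%N * g 3%N + 2 * f 2%N * g 4%N
       + f 3%N * g 2%N + 2 * f 3%N * g 3%N + f 4%N * g 2%N + choose2 (f 2%N * g 2%N)) * 2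
    + g 2%N * (f 2%N * (f 2%N - 1)) + 3 * g 3%N * ((f 2%N + 1) * (f 2%N + 1 - 1))
    + (f 2%N * g 2%N + 1) * (f 2%N * g 2%N + 1 - 1).
  by rewrite /inv4 scomp3 // !choose2D; expand_scomp; rewrite f1 g0 g1; ring.
by rewrite !parityD parity_mul2 !parity_mul_consec parity_consec !addr0.
Qed.

Lemma parity_inv5_scomp :
  parity (inv5 (scomp g f)) = parity (inv5 f) + parity (inv5 g).
Proof.
have -> : inv5 (scomp g f) = inv5 f + inv5 g
    + (f 2%N * f 3%N * g 2%N + 4 * f 2%N * f 3%N * g 2%N * g 3%N
       + 8 * f 2%N * f 3%N * g 4%N + f 2%N * f 3%N * f 3%N * g 2%N
       + 2 * f 2%N * f 4%N * g 2%N * g 2%N + 3 * f 2%N * f 4%N * g 3%N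
       + 2 * f 2%N * f 5%N * g 2%N + f 2%N * g 2%N * g 5%N + 2 * f 2%N * g 3%N * g 4%N
       + 2 * f 2%N * g 4%N + 3 * f 2%N * g 6%N + 2 * f 2%N ^+ 2 * f 3%N * g 2%N ^+ 2
       + 3 * f 2%N ^+ 2 * f 3%N * g 3%N + 4 * f 2%N ^+ 2 * g 2%N * g 4%N
       + 5 * f 2%N ^+ 2 * g 5%N + 3 * f 2%N ^+ 3 * g 2%N * g 3%N + 2 * f 2%N ^+ 3 * g 4%N
       + 2 * f 3%N * f 4%N * g 2%N + 3 * f 3%N * g 5%N + 3 * f 3%N ^+ 2 * g 3%N
       + f 4%N * g 2%N + f 4%N * g 2%N * g 3%N + 2 * f 4%N * g 4%N + 2 * f 5%N * g 3%N
       + f 6%N * g 2%N) * 2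
    + 3 * (f 3%N + f 2%N ^+ 2) * ((g 3%N + 1) * (g 3%N + 1 - 1)).
  by rewrite /inv5 scomp3 //; expand_scomp; rewrite f1 g0 g1; ring.
by rewrite !parityD parity_mul2 parity_mul_consec !addr0.
Qed.

End CompositionCoefficients.

Lemma rmul1_coef1 x y : isSR x -> isSR y -> (rmul x y).1 1%N = x.1 1%N + y.1 1%N.
Proof.
move=> [x10 [x20 x21]] [y10 _]; rewrite /rmul /= smulE !big_ord_recl big_ord0 /=.
by rewrite scomp1 // scomp0 x10 x21 y10 !mulr1 mul1r addr0 addrC.
Qed.

Lemma ab_rmul x y : isSR x -> isSR y -> ab (rmul x y) = ab x + ab y.
Proof.
move=> SRx SRy; have g1 := rmul1_coef1 SRx SRy.
case: x y SRx SRy g1 => [x1 x2] [y1 y2] [/= _ [x20 x21]] [/= _ [y20 y21]] g1.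
rewrite /ab /= g1 scomp2 // scomp3 // parity_inv4_scomp // parity_inv5_scomp //.
by congr (_, _, _, _, _); rewrite /=; ring.
Qed.

Lemma ab_agree x y : agree 8 x y -> ab x = ab y.
Proof.
move=> xy; rewrite /ab /inv4 /inv5.
have E1 d : (d < 8)%N -> x.1 d = y.1 d by move=> lt_d; case: (xy d lt_d).
have E2 d : (d < 8)%N -> x.2 d = y.2 d by move=> lt_d; case: (xy d lt_d).
by rewrite !E1 // !E2.
Qed.

Lemma ab_rid : ab rid = 0.
Proof. by rewrite /ab /inv4 /inv5 /= choose2_0 /= mulr0 !addr0. Qed.

Lemma ab_commutator z : is_commutator z -> ab z = 0.
Proof.
move=> [SRz [x [y [SRx [SRy yxz_xy]]]]].
have /ab_agree : agree 8 (rmul (rmul y x) z) (rmul x y) by move=> d _; apply: yxz_xy.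
rewrite !ab_rmul //; try exact: isSR_rmul.
by rewrite (addrC (ab y)) -{2}(addr0 (ab x + ab y)) => /addrI.
Qed.

Lemma isSR_prod_comm w : prod_comm w -> isSR w.
Proof. by elim=> // w' z _ SRw' [SRz _]; apply: isSR_rmul. Qed.

Lemma ab_prod_comm w : prod_comm w -> ab w = 0.
Proof.
elim=> [|w' z pw' IH comm_z]; first exact: ab_rid.
have [SRz _] := comm_z.
by rewrite ab_rmul ?IH ?ab_commutator ?add0r //; apply: isSR_prod_comm.
Qed.

Lemma ab_top_commutator x : in_top_commutator x -> ab x = 0.
Proof.
move=> top_x; have [w [pw xw]] := top_x 7%N.
by rewrite -(ab_prod_comm pw); apply: ab_agree => d lt_d; apply: xw.
Qed.

Definition approx n x := exists w, prod_comm w /\ agree n w x.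

Lemma agreeS n w x : agree n w x -> w.1 n = x.1 n -> w.2 n = x.2 n -> agree n.+1 w x.
Proof.
move=> wx w1 w2 i; rewrite ltnS leq_eqVlt => /predU1P[->|]; [by [] | exact: wx].
Qed.

Lemma small_commutator_le m n z : (m <= n)%N -> small_commutator n z -> small_commutator m z.
Proof. by move=> le_mn [comm_z lagr_z z_near]; split => //; apply: agree_le z_near. Qed.

Lemma small_commutator_coef n z k : small_commutator n z -> (2 <= k < n)%N -> z.2 k = 0.
Proof.
move=> [_ _ z_near] /andP[ge2_k lt_kn]; have [_ ->] := z_near k lt_kn.
by rewrite /= /tX gtn_eqF.
Qed.

Lemma ab_eq0E x : ab x = 0 ->
  [/\ x.1 1%N = 0, x.2 2%N = 0, x.2 3%N = 0, parity (inv4 x.2) = 0 & parity (inv5 x.2) = 0].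
Proof. by case=> -> x2 x3 -> ->; move: x3; rewrite x2 expr0n subr0. Qed.

Lemma rmul_small_commutator w z n : prod_comm w -> (3 < n)%N -> small_commutator n z ->
  [/\ prod_comm (rmul w z), agree n (rmul w z) w, (rmul w z).1 =1 w.1
    & forall k, (n <= k <= n.+2)%N -> (rmul w z).2 k = w.2 k + z.2 k].
Proof.
move=> pw gt3_n [comm_z lagr_z z_near]; have SRw := isSR_prod_comm pw.
have [_ w2 w3 _ _] := ab_eq0E (ab_prod_comm pw).
have ge2_n : (2 <= n)%N by lia.
split; [exact: pc_mul | exact: agree_rmul_near_id | exact: rmul_lagrange1 |].
move=> k /andP[le_nk le_k]; have [->|[->|->]] : k = n \/ k = n.+1 \/ k = n.+2 by lia.
- exact: rmul_near_id2_eq.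
- by rewrite rmul_near_id2_next // w2 !mulr0 addr0.
- by rewrite rmul_near_id2_next2 // w2 w3 expr0n /= !mulr0 !addr0.
Qed.

Lemma approx_by_commutator x w z n : prod_comm w -> (3 < n)%N ->
  agree n w x -> w.1 n = x.1 n -> small_commutator n z -> z.2 n = x.2 n - w.2 n ->
  approx n.+1 x.
Proof.
move=> pw gt3_n wx w1 small_z z_n.
have [pwz wz_w wz1 wz2] := rmul_small_commutator pw gt3_n small_z.
exists (rmul w z); split => //; apply: agreeS.
- exact: agree_trans wz_w wx.
- by rewrite wz1.
- by rewrite wz2 ?leqnn ?leqW // z_n; ring.
Qed.

Lemma bin2_odd q : 'C((2 * q).+1, 2) = ((2 * q).+1 * q)%N.
Proof. by rewrite bin2 /= mulnCA mul2n doubleK. Qed.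

Lemma approx_1mod4 x w p : let n := (4 * p + 8)%N in
  prod_comm w -> agree n.+1 w x -> w.1 n.+1 = x.1 n.+1 -> approx n.+2 x.
Proof.
(* The leading terms (4p+5) δ of z1 and z2 cancel; at the next degree z1 contributes
   δ (C(4p+7, 2) - (4p+5)(4p+8)) = - δ (8p^2 + 26p + 19), and z3 adds 2 γ. *)
move=> n pw wx w1; set δ := x.2 n.+1 - w.2 n.+1.
have gt3_n : (3 < n)%N by rewrite /n; lia.
have [z1 [small1 z1_n z1_n1]] := @commutator_elem_t2 (4 * p + 6) n δ ltac:(lia) ltac:(lia).
have [z2 [small2 z2_n /(_ ltac:(lia))[z2_n1 _]]] :=
  @commutator_elem (2 * p + 3) (2 * p + 4) n 1 (- ((4 * p + 6)%:R - 1) * δ) ltac:(lia) ltac:(lia).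
set γ := δ * (4 * p%:R ^+ 2 + 13 * p%:R + 10).
have [z3 [small3 z3_n1 _]] :=
  @commutator_elem (2 * p + 3) (2 * p + 5) n.+1 1 γ ltac:(lia) ltac:(lia).
have [r0 r1] : (n <= n <= n.+2)%N /\ (n <= n.+1 <= n.+2)%N by split; lia.
have [pw1 a1 g1 c1] := rmul_small_commutator pw gt3_n small1.
have [pw2 a2 g2 c2] := rmul_small_commutator pw1 gt3_n small2.
have [pw3 a3 g3 c3] := rmul_small_commutator pw2 gt3_n (small_commutator_le (leqnSn n) small3).
have z3_n : z3.2 n = 0 by apply: (small_commutator_coef small3); lia.
exists (rmul (rmul (rmul w z1) z2) z3); split => //; apply: agreeS; first apply: agreeS.
- by apply: agree_trans a3 (agree_trans a2 (agree_trans a1 (agree_le (leqnSn n) wx))).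
- by rewrite g3 g2 g1; case: (wx n (ltnSn n)).
- rewrite c3 ?c2 ?c1 ?r0 // z1_n z2_n z3_n; case: (wx n (ltnSn n)) => _ ->; ring.
- by rewrite g3 g2 g1.
have C7 : 'C((4 * p + 6).+1, 2) = ((4 * p + 7) * (2 * p + 3))%N.
  by rewrite (_ : (4 * p + 6).+1 = (2 * (2 * p + 3)).+1)%N ?bin2_odd //; lia.
rewrite c3 ?c2 ?c1 ?r1 // z1_n1 z2_n1 z3_n1 C7 /γ /δ; ring.
Qed.

Lemma approx_3mod4 x w p : let n := (4 * p + 9)%N in
  prod_comm w -> agree n.+2 w x -> w.1 n.+2 = x.1 n.+2 -> approx n.+3 x.
Proof.
(* The leading terms (4p+4) δ of z1 and z2 cancel, nothing changes in degree n+1, and in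
   degree n+2 z1 contributes δ (C(4p+7, 2) - (4p+4)(4p+9)) = - δ (8p^2 + 26p + 15) while
   z3 adds 2 γ. *)
move=> n pw wx w1; set δ := x.2 n.+2 - w.2 n.+2.
have gt3_n : (3 < n)%N by rewrite /n; lia.
have [z1 [small1 z1_n z1_n1 z1_n2]] :=
  @commutator_elem_t3 (4 * p + 6) n δ ltac:(lia) ltac:(lia).
have [z2 [small2 z2_n /(_ ltac:(lia))[z2_n1 z2_n2]]] :=
  @commutator_elem (2 * p + 3) (2 * p + 5) n 1 (- (2 * p + 2)%:R * δ) ltac:(lia) ltac:(lia).
set γ := δ * (4 * p%:R ^+ 2 + 13 * p%:R + 8).
have [z3 [small3 z3_n2 _]] :=
  @commutator_elem (2 * p + 4) (2 * p + 6) n.+2 1 γ ltac:(lia) ltac:(lia).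
have [r0 r1 r2] : [/\ (n <= n <= n.+2), (n <= n.+1 <= n.+2) & (n <= n.+2 <= n.+2)]%N.
  by split; lia.
have [pw1 a1 g1 c1] := rmul_small_commutator pw gt3_n small1.
have [pw2 a2 g2 c2] := rmul_small_commutator pw1 gt3_n small2.
have [pw3 a3 g3 c3] :=
  rmul_small_commutator pw2 gt3_n (small_commutator_le (leqW (leqnSn n)) small3).
have z3_n : z3.2 n = 0 by apply: (small_commutator_coef small3); lia.
have z3_n1 : z3.2 n.+1 = 0 by apply: (small_commutator_coef small3); lia.
have C7 : 'C((4 * p + 6).+1, 2) = ((4 * p + 7) * (2 * p + 3))%N.
  by rewrite (_ : (4 * p + 6).+1 = (2 * (2 * p + 3)).+1)%N ?bin2_odd //; lia.
exists (rmul (rmul (rmul w z1) z2) z3); split => //.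
apply: agreeS; first apply: agreeS; first apply: agreeS.
- by apply: agree_trans a3 (agree_trans a2 (agree_trans a1 (agree_le (leqW (leqnSn n)) wx))).
- by rewrite g3 g2 g1; case: (wx n ltac:(lia)).
- rewrite c3 ?c2 ?c1 ?r0 // z1_n z2_n z3_n; case: (wx n ltac:(lia)) => _ ->; ring.
- by rewrite g3 g2 g1; case: (wx n.+1 ltac:(lia)).
- rewrite c3 ?c2 ?c1 ?r1 // z1_n1 z2_n1 z3_n1.
  by case: (wx n.+1 ltac:(lia)) => _ ->; ring.
- by rewrite g3 g2 g1.
rewrite c3 ?c2 ?c1 ?r2 // z1_n2 z2_n2 z3_n2 C7 /γ /δ; ring.
Qed.

Lemma approx_by_elem x w n i j a : prod_comm w -> (1 <= i < j)%N -> n = (i + j).+1 ->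
  agree n w x -> w.1 n = x.1 n -> (j%:R - i%:R) * a = x.2 n - w.2 n -> approx n.+1 x.
Proof.
move=> pw ij def_n wx w1 z_n; have [z [small_z z_n' _]] := commutator_elem a 1 ij def_n.
by apply: approx_by_commutator pw _ wx w1 small_z _; rewrite ?z_n' ?mulr1 //; lia.
Qed.

Lemma approx_fix_f_large x w n : prod_comm w -> (8 <= n)%N ->
  agree n w x -> w.1 n = x.1 n -> approx n.+1 x.
Proof.
move=> pw ge8_n wx w1; set δ := x.2 n - w.2 n.
move: (divn_eq n 4) (ltn_pmod n (isT : (0 < 4)%N)); set q := (n %/ 4)%N.
case: (n %% 4)%N => [|[|[|[|//]]]] def_n _.
- by apply: (@approx_by_elem x w n (2 * q - 1) (2 * q) δ pw _ _ wx w1); lia.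
- move: wx w1; rewrite def_n (_ : (q * 4 + 1 = (4 * (q - 2) + 8).+1)%N); last lia.
  exact: approx_1mod4 pw.
- by apply: (@approx_by_elem x w n (2 * q) (2 * q).+1 δ pw _ _ wx w1); lia.
- move: wx w1; rewrite def_n (_ : (q * 4 + 3 = (4 * (q - 2) + 9).+2)%N); last lia.
  exact: approx_3mod4 pw.
Qed.

Lemma approx_fix_f x w n : ab x = 0 -> prod_comm w -> (2 <= n)%N ->
  agree n w x -> w.1 n = x.1 n -> approx n.+1 x.
Proof.
move=> abx pw ge2_n wx w1; have [ge8_n|lt8_n] := leqP 8 n.
  exact: approx_fix_f_large pw ge8_n wx w1.
have [_ x2 x3 x4 x5] := ab_eq0E abx; have [_ w2 w3 w4 w5] := ab_eq0E (ab_prod_comm pw).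
have coef_wx d : (d < n)%N -> w.2 d = x.2 d by move=> lt_dn; case: (wx d lt_dn).
have keep : w.2 n = x.2 n -> approx n.+1 x by exists w; split => //; apply: agreeS.
have by_elem i j a := @approx_by_elem x w n i j a pw.
case: n ge2_n lt8_n wx w1 coef_wx keep by_elem => [|[|[|[|[|[|[|[|//]]]]]]]] //= _ _ wx w1
  coef_wx keep by_elem.
- by apply: keep; rewrite w2 x2.
- by apply: keep; rewrite w3 x3.
- by apply: (by_elem 1%N 2%N (x.2 4%N - w.2 4%N)) => //; ring.
- have [k dk] : exists k, x.2 5%N - w.2 5%N = k * 2.
    apply: parity_eq0; rewrite (_ : _ - _ = inv4 x.2 - inv4 w.2) ?parityB ?x4 ?w4 ?subrr //.
    by rewrite /inv4 (coef_wx 3%N) ?(coef_wx 4%N) //; ring.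
  by apply: (by_elem 1%N 3%N k) => //; rewrite dk; ring.
- by apply: (by_elem 2%N 3%N (x.2 6%N - w.2 6%N)) => //; ring.
- have [k dk] : exists k, x.2 7%N - w.2 7%N = k * 2.
    apply: parity_eq0; rewrite (_ : _ - _ = inv5 x.2 - inv5 w.2) ?parityB ?x5 ?w5 ?subrr //.
    by rewrite /inv5 (coef_wx 3%N) ?(coef_wx 5%N) //; ring.
  by apply: (by_elem 2%N 4%N k) => //; rewrite dk; ring.
Qed.

Lemma approx_fix_g x w n : isSR x -> prod_comm w -> (2 <= n)%N -> agree n w x ->
  exists w', [/\ prod_comm w', agree n w' x & w'.1 n = x.1 n].
Proof.
move=> SRx pw ge2_n wx; have SRw := isSR_prod_comm pw.
have [z [comm_z z_near z_n]] := @commutator_appell n.-1 (x.1 n - w.1 n) ltac:(lia).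
rewrite prednK in z_near z_n; last lia.
exists (rmul w z); split; first exact: pc_mul.
  exact: agree_trans (agree_rmul_near_id SRw z_near ge2_n) wx.
by rewrite rmul_near_id1_eq ?z_n 1?addrC ?subrK //; lia.
Qed.

Lemma approx_of_ab0 x : isSR x -> ab x = 0 -> forall n, approx n x.
Proof.
move=> SRx abx; elim=> [|n [w [pw wx]]].
  by exists rid; split=> [|i]; [exact: pc_id | rewrite ltn0].
have [lt2_n|ge2_n] := ltnP n 2.
  case: SRx => x10 [x20 x21]; have [x11 _ _ _ _] := ab_eq0E abx.
  exists rid; split=> [|[|[|i]] lt_i /=]; first exact: pc_id.
  - by rewrite x10 x20.
  - by rewrite x11 x21.
  - lia.
have [w' [pw' w'x w'1]] := approx_fix_g SRx pw ge2_n wx.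
exact: approx_fix_f abx pw' ge2_n w'x w'1.
Qed.

Lemma top_commutator_of_ab0 x : isSR x -> ab x = 0 -> in_top_commutator x.
Proof.
move=> SRx abx N; have [w [pw wx]] := approx_of_ab0 SRx abx N.+1.
by exists w; split => // n le_nN; case: (wx n le_nN) => -> ->.
Qed.

Lemma ab_eq0_iff g f : isSR (g, f) ->
  ab (g, f) = 0 <-> [/\ g 1%N = 0, f 2%N = 0, f 3%N = 0,
                       (f 4%N == f 5%N %[mod 2])%Z & (f 5%N == f 7%N %[mod 2])%Z].
Proof.
move=> _; split.
  move/ab_eq0E => [/= g1 f2 f3 p4 p5]; split => //; rewrite eqz_mod_dvd; apply/dvdzP.
    move: p4; rewrite /inv4 f3 choose2_0 addr0 => /parity_eq0[k dk].
    by exists (k - f 5%N); rewrite mulrBl -dk; ring.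
  move: p5; rewrite /inv5 f3 mul0r addr0 => /parity_eq0[k dk].
  by exists (k - f 7%N); rewrite mulrBl -dk; ring.
case=> g1 f2 f3; rewrite !eqz_mod_dvd => /dvdzP[k4 dk4] /dvdzP[k5 dk5].
rewrite /ab /inv4 /inv5 /= g1 f2 f3 choose2_0.
rewrite (_ : f 4%N + f 5%N + 0 = (k4 + f 5%N) * 2); last by rewrite mulrDl -dk4; ring.
rewrite (_ : f 5%N + f 7%N + 0 * f 5%N = (f 7%N + k5) * 2); last by rewrite mulrDl -dk5; ring.
by rewrite !parity_mul2 expr0n /= subrr.
Qed.

Lemma parity_nat (d : 'Z_2) : parity (d : nat)%:Z = d.
Proof. by rewrite /parity -pmulrn natr_Zp. Qed.

Lemma ab_surj v : exists x, isSR x /\ ab x = v.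
Proof.
case: v => [[[[a b] c] d] e].
pose f : series := fun k => if k == 1%N then 1 else if k == 2%N then b
  else if k == 3%N then c + b ^+ 2 else if k == 4%N then (d : nat)%:Z - choose2 (c + b ^+ 2)
  else if k == 7%N then (e : nat)%:Z else 0.
exists (appell1 a, f); split => //.
rewrite /ab /inv4 /inv5 /f /appell1 /= addr0 subrK mulr0 addr0 add0r !parity_nat.
by congr (_, _, _, _, _); ring.
Qed.

Theorem corollary4 :
  (forall g f : series, isSR (g, f) ->
     (in_top_commutator (g, f) <->
        [/\ g 1%N = 0, f 2%N = 0, f 3%N = 0,
            (f 4%N == f 5%N %[mod 2])%Z & (f 5%N == f 7%N %[mod 2])%Z]))
  /\
  (* S R(Z)^ab = Z^3 x (Z_2)^2 : a surjective homomorphism onto it whose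
     kernel is the topological commutator subgroup *)
  (exists phi : riordan -> (int * int * int * 'Z_2 * 'Z_2)%type,
     (forall x y, isSR x -> isSR y -> phi (rmul x y) = phi x + phi y) /\
     (forall v, exists x, isSR x /\ phi x = v) /\
     (forall x, isSR x -> (phi x = 0 <-> in_top_commutator x))).
Proof.
have top_iff x : isSR x -> ab x = 0 <-> in_top_commutator x.
  by move=> SRx; split; [exact: top_commutator_of_ab0 | exact: ab_top_commutator].
split=> [g f SRgf | ]; first by rewrite -top_iff // ab_eq0_iff.
by exists ab; split; [exact: ab_rmul | split; [exact: ab_surj | exact: top_iff]].
Qed.
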